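(* Let $(\Omega,\mathcal A)$ be a Borel space, $(\Omega,X_\bullet)$ a Borel field of metric spaces, and $U_\bullet$ a subfield such that $U_\omega$ is open in $X_\omega$ for every $\omega$. If there is a fundamental family $\mathcal D$ of $\mathcal L(\Omega,X_\bullet)$ such that $\{\omega\in\Omega\mid x_\omega\in U_\omega\}\in\mathcal A$ for every $x_\bullet\in\mathcal D$, then $U_\bullet$ is a Borel subfield.
   Context: Borel field of metric spaces: $(X_\omega,d_\omega)_{\omega\in\Omega}$ metric spaces; a section is $x_\bullet=(x_\omega)$, $x_\omega\in X_\omega$. A Borel structure is a set $\mathcal L(\Omega,X_\bullet)$ of sections such that (a) $\omega\mapsto d_\omega(x_\omega,y_\omega)$ is Borel for all $x_\bullet,y_\bullet\in\mathcal L$; (b) any section $y_\bullet$ with $\omega\mapsto d_\omega(x_\omega,y_\omega)$ Borel for all $x_\bullet\in\mathcal L$ lies in $\mathcal L$; (c) there is a countable $\mathcal D=\{x^n_\bullet\}\subseteq\mathcal L$ (fundamental family) with $\{x^n_\omega\}_n$ dense in $X_\omega$ for all $\omega$. For Borel $\Omega'$, $\mathcal L(\Omega',X_\bullet)$ = restrictions to $\Omega'$ of Borel sections. A subfield is $A_\bullet=(A_\omega)$ with $A_\omega\subseteq X_\omega$ (possibly empty); it is Borel if $\Omega'=\{\omega:A_\omega\ne\emptyset\}\in\mathcal A$ and there are countably many $y^n_\bullet\in\mathcal L(\Omega',X_\bullet)$ with $y^n_\omega\in A_\omega$ and $A_\omega\subseteq\overline{\{y^n_\omega\}_n}$ for all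 $\omega\in\Omega'$. *)

From Stdlib Require Import Reals.
Open Scope R_scope.

Definition sigma_algebra {T : Type} (S : (T -> Prop) -> Prop) : Prop :=
  S (fun _ => True) /\
  (forall B, S B -> S (fun x => ~ B x)) /\
  (forall Bs : nat -> T -> Prop, (forall n, S (Bs n)) ->
      S (fun x => exists n, Bs n x)).

Definition R_open (O : R -> Prop) : Prop :=
  forall x, O x -> exists eps, eps > 0 /\ forall y, Rabs (y - x) < eps -> O y.

Definition R_Borel (B : R -> Prop) : Prop :=
  forall S : (R -> Prop) -> Prop, sigma_algebra S ->
    (forall O, R_open O -> S O) -> S B.

Definition Borel_fun {Omega : Type} (A : (Omega -> Prop) -> Prop)
  (f : Omega -> R) : Prop :=
  forall B, R_Borel B -> A (fun w => B (f w)).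

Definition is_metric {X : Type} (d : X -> X -> R) : Prop :=
  (forall p q, 0 <= d p q) /\
  (forall p q, d p q = 0 <-> p = q) /\
  (forall p q, d p q = d q p) /\
  (forall p q r, d p r <= d p q + d q r).

Definition section {Omega : Type} (X : Omega -> Type) : Type := forall w, X w.

(* countable family of sections (possibly finite or empty) *)
Definition countable_family {T : Type} (D : T -> Prop) : Prop :=
  exists e : nat -> option T, forall s, D s <-> exists n, e n = Some s.

Definition in_closure_of {X : Type} (d : X -> X -> R) {I : Type}
  (Ind : I -> Prop) (f : I -> X) (p : X) : Prop :=
  forall eps, eps > 0 -> exists i, Ind i /\ d p (f i) < eps.

Definition fundamental_family {Omega : Type} {X : Omega -> Type}
  (d : forall w, X w -> X w -> R) (L : section X -> Prop)
  (D : section X -> Prop) : Prop :=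
  countable_family D /\ (forall x, D x -> L x) /\
  (forall w (p : X w), in_closure_of (d w) D (fun x => x w) p).

Definition Borel_structure {Omega : Type} (A : (Omega -> Prop) -> Prop)
  {X : Omega -> Type} (d : forall w, X w -> X w -> R)
  (L : section X -> Prop) : Prop :=
  (forall x y, L x -> L y -> Borel_fun A (fun w => d w (x w) (y w))) /\
  (forall y, (forall x, L x -> Borel_fun A (fun w => d w (x w) (y w))) -> L y) /\
  (exists D, fundamental_family d L D).

Definition Borel_field {Omega : Type} (A : (Omega -> Prop) -> Prop)
  (X : Omega -> Type) (d : forall w, X w -> X w -> R)
  (L : section X -> Prop) : Prop :=
  sigma_algebra A /\ (forall w, is_metric (d w)) /\ Borel_structure A d L.

Definition subfield {Omega : Type} (X : Omega -> Type) : Type :=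
  forall w, X w -> Prop.

Definition metric_open {X : Type} (d : X -> X -> R) (U : X -> Prop) : Prop :=
  forall p, U p -> exists eps, eps > 0 /\ forall q, d p q < eps -> U q.

(* Borel subfield: Omega' = {w | U_w nonempty} in A, and countably many
   y^n in L(Omega', X) (= restrictions to Omega' of Borel sections) with
   y^n_w in U_w and U_w in the closure of {y^n_w} for all w in Omega'. *)
Definition Borel_subfield {Omega : Type} (A : (Omega -> Prop) -> Prop)
  {X : Omega -> Type} (d : forall w, X w -> X w -> R)
  (L : section X -> Prop) (U : subfield X) : Prop :=
  let Omega' := fun w => exists p, U w p in
  A Omega' /\
  exists Y : section X -> Prop,
    countable_family Y /\ (forall y, Y y -> L y) /\
    (forall w, Omega' w ->
       (forall y, Y y -> U w (y w)) /\
       (forall p, U w p -> in_closure_of (d w) Y (fun y => y w) p)).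

(* Let D be a fundamental family such that every set {w | x_w ∈ U_w}, x ∈ D,
   is measurable, and enumerate D as x^0, x^1, ...  Since U_w is open and
   {x^n_w} is dense in X_w, the points x^n_w lying in U_w are dense in U_w;
   in particular Ω' = {w | U_w ≠ ∅} is the countable union of the measurable
   sets A_n = {w | x^n_w ∈ U_w}.  The Borel sections required by the
   definition are obtained by patching: y^n_w = x^n_w on A_n, and elsewhere
   y^n_w = x^k_w for the first index k with w ∈ A_k.  (If D is empty, then by
   density every X_w, hence every U_w, is empty, and there is nothing to do.) *)

From Stdlib Require Import Reals.
From Stdlib Require Import Classical ClassicalEpsilon FunctionalExtensionality
  PropExtensionality Wf_nat Lia Lra.

Section SigmaAlgebra.
Context {T : Type} (A : (T -> Prop) -> Prop).
Hypothesis HA : sigma_algebra A.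

Lemma measurable_ext (S S' : T -> Prop) :
  A S -> (forall w, S w <-> S' w) -> A S'.
Proof.
  intros HS E. replace S' with S; [exact HS |].
  apply functional_extensionality; intro w; apply propositional_extensionality; apply E.
Qed.

Lemma measurable_compl (S : T -> Prop) : A S -> A (fun w => ~ S w).
Proof. destruct HA as [_ [Hc _]]; apply Hc. Qed.

Lemma measurable_countable_union (Bs : nat -> T -> Prop) :
  (forall n, A (Bs n)) -> A (fun w => exists n, Bs n w).
Proof. destruct HA as [_ [_ Hu]]; apply Hu. Qed.

Lemma measurable_empty : A (fun _ => False).
Proof.
  destruct HA as [Hfull _].
  apply (measurable_ext _ _ (measurable_compl _ Hfull)); tauto.
Qed.

Lemma measurable_union (S S' : T -> Prop) :
  A S -> A S' -> A (fun w => S w \/ S' w).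
Proof.
  intros HS HS'.
  apply (measurable_ext (fun w => exists n, match n with O => S w | _ => S' w end)).
  - apply measurable_countable_union; intros [|n]; assumption.
  - intro w; split.
    + intros [[|n] Hn]; auto.
    + intros [H | H]; [exists O | exists 1%nat]; exact H.
Qed.

Lemma measurable_inter (S S' : T -> Prop) :
  A S -> A S' -> A (fun w => S w /\ S' w).
Proof.
  intros HS HS'.
  apply (measurable_ext (fun w => ~ (~ S w \/ ~ S' w))); [| intro w; tauto].
  apply measurable_compl, measurable_union; apply measurable_compl; assumption.
Qed.

Lemma measurable_const (P : Prop) : A (fun _ => P).
Proof.
  destruct (classic P) as [HP | HP].
  - apply (measurable_ext (fun _ => True)); [exact (proj1 HA) | tauto].
  - apply (measurable_ext (fun _ => False)); [exact measurable_empty | tauto].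
Qed.

Lemma measurable_if (C S S' : T -> Prop) :
  A C -> A S -> A S' -> A (fun w => (C w /\ S w) \/ (~ C w /\ S' w)).
Proof.
  intros HC HS HS'.
  apply measurable_union; apply measurable_inter; auto using measurable_compl.
Qed.

Variable An : nat -> T -> Prop.
Hypothesis HAn : forall n, A (An n).

Definition is_first_index (w : T) (k : nat) : Prop :=
  (An k w /\ forall j, An j w -> (k <= j)%nat) \/ ((~ exists j, An j w) /\ k = O).

Definition first_index (w : T) : nat := epsilon (inhabits O) (is_first_index w).

Lemma is_first_index_exists (w : T) : exists k, is_first_index w k.
Proof.
  destruct (classic (exists j, An j w)) as [Hw | Hw].
  - destruct (dec_inh_nat_subset_has_unique_least_element (fun k => An k w)
                (fun k => classic (An k w)) Hw) as [k [Hk _]].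
    exists k; left; exact Hk.
  - exists O; right; auto.
Qed.

Lemma is_first_index_unique (w : T) (k k' : nat) :
  is_first_index w k -> is_first_index w k' -> k = k'.
Proof.
  intros [[Hk Hmin] | [Hno ->]] [[Hk' Hmin'] | [Hno' ->]].
  - specialize (Hmin _ Hk'); specialize (Hmin' _ Hk); lia.
  - exfalso; eauto.
  - exfalso; eauto.
  - reflexivity.
Qed.

Lemma first_index_spec (w : T) : is_first_index w (first_index w).
Proof. unfold first_index; apply epsilon_spec, is_first_index_exists. Qed.

Lemma first_index_mem (w : T) : (exists j, An j w) -> An (first_index w) w.
Proof. intro Hw. destruct (first_index_spec w) as [[Hk _] | [Hno _]]; tauto. Qed.

Lemma first_index_level_measurable (k : nat) : A (fun w => first_index w = k).
Proof.
  apply (measurable_ext (fun w => is_first_index w k)).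
  - apply measurable_union.
    + apply (measurable_ext (fun w => An k w /\ ~ exists j, (j < k)%nat /\ An j w)).
      * apply measurable_inter, measurable_compl, measurable_countable_union; auto.
        intro j; destruct (Nat.lt_ge_cases j k).
        -- apply (measurable_ext (An j)); auto; intro; tauto.
        -- apply (measurable_ext (fun _ => False)); [apply measurable_empty |].
           intro; split; [tauto | lia].
      * intro w; split; intros [Hk Hmin]; split; auto.
        -- intros j Hj; destruct (Nat.lt_ge_cases j k); auto; exfalso; eauto.
        -- intros [j [Hjk Hj]]; specialize (Hmin _ Hj); lia.
    + apply measurable_inter; [| apply measurable_const].
      apply measurable_compl, measurable_countable_union; auto.
  - intro w; split.
    + intro Hk; apply (is_first_index_unique w); auto using first_index_spec.
    + intros <-; apply first_index_spec.
Qed.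

End SigmaAlgebra.

Arguments measurable_ext {T A}.

Section Patching.
Context {Omega : Type} (A : (Omega -> Prop) -> Prop).
Context {X : Omega -> Type} (d : forall w, X w -> X w -> R) (L : section X -> Prop).
Hypothesis HA : sigma_algebra A.
Hypothesis Hdist : forall x y, L x -> L y -> Borel_fun A (fun w => d w (x w) (y w)).
Hypothesis Hclosed :
  forall y, (forall x, L x -> Borel_fun A (fun w => d w (x w) (y w))) -> L y.

(* Gluing countably many Borel sections along an index function with
   measurable level sets gives a Borel section: the distance to a Borel
   section x is, on the level set {m = k}, the Borel function d(x, f k). *)
Lemma glue_Borel_sections (f : nat -> section X) (m : Omega -> nat) :
  (forall n, L (f n)) -> (forall k, A (fun w => m w = k)) ->
  L (fun w => f (m w) w).
Proof.
  intros Hf Hm. apply Hclosed; intros x Hx B HB.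
  apply (measurable_ext (fun w => exists k, m w = k /\ B (d w (x w) (f k w)))).
  - apply (measurable_countable_union A HA); intro k.
    apply (measurable_inter A HA); auto. apply (Hdist x (f k)); auto.
  - intro w; split; [intros [k [<- Hk]]; exact Hk | intro Hw; exists (m w); auto].
Qed.

Variables (f : nat -> section X) (An : nat -> Omega -> Prop).
Hypothesis Hf : forall n, L (f n).
Hypothesis HAn : forall n, A (An n).

Definition patch_index (n : nat) (w : Omega) : nat :=
  if excluded_middle_informative (An n w) then n else first_index An w.

Definition patched_section (n : nat) : section X := fun w => f (patch_index n w) w.

Lemma patch_index_level_measurable (n k : nat) :
  A (fun w => patch_index n w = k).
Proof.
  apply (measurable_ext
    (fun w => (An n w /\ n = k) \/ (~ An n w /\ first_index An w = k))).
  - apply (measurable_if A HA);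
      [apply HAn | apply (measurable_const A HA)
      | exact (first_index_level_measurable A HA An HAn k)].
  - intro w; unfold patch_index.
    destruct (excluded_middle_informative (An n w)); tauto.
Qed.

Lemma patched_section_Borel (n : nat) : L (patched_section n).
Proof.
  exact (glue_Borel_sections f (patch_index n) Hf (patch_index_level_measurable n)).
Qed.

Lemma patched_section_eq (n : nat) (w : Omega) :
  An n w -> patched_section n w = f n w.
Proof.
  intro Hn; unfold patched_section, patch_index.
  destruct (excluded_middle_informative (An n w)); tauto.
Qed.

Lemma patched_section_hits (n : nat) (w : Omega) :
  (exists k, An k w) -> exists k, An k w /\ patched_section n w = f k w.
Proof.
  intro Hw; unfold patched_section, patch_index.
  destruct (excluded_middle_informative (An n w)) as [Hn | _].
  - exists n; auto.
  - exists (first_index An w); split; [apply first_index_mem |]; auto.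
Qed.

End Patching.

Lemma dense_in_open {Y I : Type} (d : Y -> Y -> R) (U : Y -> Prop)
  (D : I -> Prop) (g : I -> Y) :
  metric_open d U -> (forall p, in_closure_of d D g p) ->
  forall p, U p -> forall eps, eps > 0 ->
  exists i, D i /\ U (g i) /\ d p (g i) < eps.
Proof.
  intros Hopen Hdense p Hp eps Heps.
  destruct (Hopen p Hp) as [r [Hr Hball]].
  destruct (Hdense p (Rmin eps r)) as [i [Di Hi]]; [apply Rmin_pos; lra |].
  exists i; repeat split; auto.
  - apply Hball; eapply Rlt_le_trans; [exact Hi | apply Rmin_r].
  - eapply Rlt_le_trans; [exact Hi | apply Rmin_l].
Qed.

Lemma countable_family_enum {T : Type} (D : T -> Prop) (s0 : T) :
  countable_family D -> D s0 ->
  exists f : nat -> T, (forall n, D (f n)) /\ (forall x, D x -> exists n, f n = x).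
Proof.
  intros [e He] Ds0.
  exists (fun n => match e n with Some s => s | None => s0 end); split.
  - intro n; destruct (e n) eqn:En; auto. apply He; eauto.
  - intros x Dx; destruct (proj1 (He x) Dx) as [n En]; exists n; rewrite En; auto.
Qed.

Lemma countable_range {T : Type} (y : nat -> T) :
  countable_family (fun s => exists n, y n = s).
Proof.
  exists (fun n => Some (y n)); intro s; split; intros [n Hn]; exists n;
    [now rewrite Hn | now injection Hn].
Qed.

Lemma Borel_subfield_empty {Omega : Type} (A : (Omega -> Prop) -> Prop)
  {X : Omega -> Type} (d : forall w, X w -> X w -> R) (L : section X -> Prop)
  (U : subfield X) :
  sigma_algebra A -> (forall w p, ~ U w p) -> Borel_subfield A d L U.
Proof.
  intros HA Hempty; split.
  - apply (measurable_ext (fun _ => False)); [apply measurable_empty; auto |].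
    intro w; split; [tauto | intros [p Hp]; exact (Hempty w p Hp)].
  - exists (fun _ => False); split; [| split; [tauto |]].
    + exists (fun _ => None); intro s; split; [tauto | intros [n Hn]; discriminate].
    + intros w [p Hp]; exfalso; exact (Hempty w p Hp).
Qed.

Theorem mainTheorem4 (Omega : Type) (A : (Omega -> Prop) -> Prop)
  (X : Omega -> Type) (d : forall w, X w -> X w -> R)
  (L : section X -> Prop) (U : subfield X) :
  Borel_field A X d L ->
  (forall w, metric_open (d w) (U w)) ->
  (exists D, fundamental_family d L D /\
     forall x, D x -> A (fun w => U w (x w))) ->
  Borel_subfield A d L U.
Proof.
  intros [HA [_ [Hdist [Hclosed _]]]] Hopen [D [[HDc [HDL Hdense]] HDU]].
  pose proof (fun w => dense_in_open (d w) (U w) D (fun x => x w) (Hopen w) (Hdense w))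
    as HUdense.
  destruct (classic (exists s0, D s0)) as [[s0 Ds0] | HnoD].
  2: { apply Borel_subfield_empty; auto; intros w p Hp.
       destruct (HUdense w p Hp 1) as [x [Dx _]]; [lra | eauto]. }
  destruct (countable_family_enum D s0 HDc Ds0) as [f [HfD HDf]].
  set (An := fun n w => U w (f n w)).
  assert (HOmega : forall w, (exists p, U w p) <-> exists n, An n w).
  { intro w; split; [| intros [n Hn]; eauto].
    intros [p Hp]; destruct (HUdense w p Hp 1) as [x [Dx [Ux _]]]; [lra |].
    destruct (HDf x Dx) as [n <-]; eauto. }
  assert (HAn : forall n, A (An n)) by (intro n; apply HDU, HfD).
  split.
  { apply (measurable_ext (fun w => exists n, An n w));
      [exact (measurable_countable_union A HA An HAn) | intro w; symmetry; apply HOmega]. }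
  exists (fun s => exists n, patched_section f An n = s).
  split; [apply countable_range | split].
  - intros s [n <-]; apply (patched_section_Borel A d L); auto.
  - intros w Hw; apply HOmega in Hw; split.
    + intros s [n <-]; destruct (patched_section_hits f An n w Hw) as [k [Hk ->]]; exact Hk.
    + intros p Hp eps Heps; destruct (HUdense w p Hp eps Heps) as [x [Dx [Ux Hpx]]].
      destruct (HDf x Dx) as [n <-]; exists (patched_section f An n); split; [eauto |].
      rewrite (patched_section_eq f An n w Ux); exact Hpx.
Qed.
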